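(* Let $\eta$ be a (sufficiently regular, e.g. classical) solution of the uniformly compressing curve-shortening flow described below, with $L(t)=L(\eta(t))$. Then (i) $\partial_t L=-L^{-3}\int_0^1\tilde\sigma\,|\partial_{ss}\eta|^2\,ds$; (ii) $\partial_{tt}\big(L(t)^2\big)\ge 0$.
   Context: $\mathbb S^1=\mathbb R/\mathbb Z$, $d\ge 2$, $L(\eta)=\int_0^1|\partial_s\eta|\,ds$. The uniformly compressing curve-shortening flow is: $\eta:[0,t^\ast)\times\mathbb S^1\to\mathbb R^d$ with, for each $t$, $\int_0^1\eta(t,s)\,ds=0$ and $|\partial_s\eta(t,s)|=L(t)>0$ for all $s$, satisfying $$\partial_t\eta=L(t)^{-2}\partial_s(\tilde\sigma\,\partial_s\eta),$$ where the function $\tilde\sigma(t,\cdot):\mathbb S^1\to\mathbb R$ satisfies, for all $(t,s)$, $$\partial_{ss}\tilde\sigma-L^{-2}\tilde\sigma|\partial_{ss}\eta|^2=-L^{-2}\int_0^1\tilde\sigma|\partial_{ss}\eta|^2\,ds,\qquad \int_0^1\tilde\sigma(t,s)\,ds=1.$$ *)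

From Stdlib Require Import Reals.
From Coquelicot Require Import Coquelicot.
Open Scope R_scope.

Fixpoint sumd (d : nat) (f : nat -> R) : R :=
  match d with O => 0 | S k => sumd k f + f k end.

(* Euclidean norm of a vector of R^d, represented by its components v 0 .. v (d-1). *)
Definition vnorm2 (d : nat) (v : nat -> R) : R := sumd d (fun i => v i ^ 2).
Definition vnorm (d : nat) (v : nat -> R) : R := sqrt (vnorm2 d v).

Definition in_time (tstar : Rbar) (t : R) : Prop := 0 < t /\ Rbar_lt t tstar.

Definition dt (f : R -> R -> R) : R -> R -> R := fun t s => Derive (fun u => f u s) t.
Definition ds (f : R -> R -> R) : R -> R -> R := fun t s => Derive (fun u => f t u) s.

Fixpoint Ck (k : nat) (tstar : Rbar) (f : R -> R -> R) : Prop :=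
  match k with
  | O => forall t s, in_time tstar t ->
           continuous (fun p : R * R => f (fst p) (snd p)) (t, s)
  | S k' =>
      (forall t s, in_time tstar t ->
         continuous (fun p : R * R => f (fst p) (snd p)) (t, s)) /\
      (forall t s, in_time tstar t ->
         ex_derive (fun u => f u s) t /\ ex_derive (fun u => f t u) s) /\
      Ck k' tstar (dt f) /\ Ck k' tstar (ds f)
  end.

Definition smooth (tstar : Rbar) (f : R -> R -> R) : Prop := forall k, Ck k tstar f.

(* 1-periodic in s: a function on S^1 = R/Z. *)
Definition periodic1 (f : R -> R -> R) : Prop := forall t s, f t (s + 1) = f t s.

(* Length of the curve eta(t) : S^1 -> R^d, eta given componentwise. *)
Definition curve_length (d : nat) (eta : nat -> R -> R -> R) (t : R) : R :=
  RInt (fun s => vnorm d (fun i => ds (eta i) t s)) 0 1.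

Definition curv2 (d : nat) (eta : nat -> R -> R -> R) (t s : R) : R :=
  vnorm2 d (fun i => ds (ds (eta i)) t s).

Definition UCCSF (d : nat) (tstar : Rbar) (eta : nat -> R -> R -> R)
    (sigma : R -> R -> R) : Prop :=
  let L := curve_length d eta in
  (forall i, (i < d)%nat -> smooth tstar (eta i) /\ periodic1 (eta i)) /\
  smooth tstar sigma /\ periodic1 sigma /\
  (forall t, in_time tstar t ->
     (forall i, (i < d)%nat -> RInt (fun s => eta i t s) 0 1 = 0) /\
     0 < L t /\
     (forall s, vnorm d (fun i => ds (eta i) t s) = L t) /\
     (forall i s, (i < d)%nat ->
        dt (eta i) t s =
        / (L t ^ 2) * Derive (fun u => sigma t u * ds (eta i) t u) s) /\
     (forall s,
        ds (ds sigma) t s - / (L t ^ 2) * sigma t s * curv2 d eta t s =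
        - / (L t ^ 2) * RInt (fun u => sigma t u * curv2 d eta t u) 0 1) /\
     RInt (fun s => sigma t s) 0 1 = 1).

From Stdlib Require Import Reals Lra.
From Coquelicot Require Import Coquelicot.
Open Scope R_scope.

(* Write P = L^2 and h = σ ∂_s η, so that ∂_t η = P^{-1} ∂_s h.  Differentiating |∂_s η|^2 = P
   in t, with ∂_t ∂_s η = P^{-1} ∂_ss h and the identities obtained by differentiating
   |∂_s η|^2 = P in s, gives P' = -2K/P where K = ∫ σ |∂_ss η|^2; this is (i).
   Differentiating once more, weighting by σ (whose mean is 1) and integrating over a period,
   P'' = ∫ σ (4 |∂_t ∂_s η|^2 - P'^2/P): the contributions of ∂_t σ and of the s-derivative of
   a periodic Wronskian integrate to zero.  The integrand is nonnegative by Cauchy-Schwarz,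
   since ∂_s η · ∂_t ∂_s η = P'/2, and because σ >= 0.  The latter is a maximum principle for
   the periodic equation σ'' = w σ - k with w >= 0: at a negative minimum σ'' >= 0 forces
   k <= 0, while ∫ (w σ^2 + σ'^2) = k ∫ σ then forces σ to be constant. *)

Lemma is_derive_value (f : R -> R) (x a b : R) : is_derive f x a -> a = b -> is_derive f x b.
Proof. intros H <-. exact H. Qed.

Lemma is_derive_continuous (f : R -> R) (x df : R) : is_derive f x df -> continuous f x.
Proof. intros H. apply (ex_derive_continuous f). exists df. exact H. Qed.

(* Coquelicot's rules, stated over normed modules, specialised to [R] so that their conclusions
   are written with [Rplus], [Rmult], ... and are accepted by [ring] and [lra]. *)
Lemma is_derive_Rplus (f g : R -> R) (x df dg : R) : is_derive f x df -> is_derive g x dg ->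
  is_derive (fun y => f y + g y) x (df + dg).
Proof. exact (is_derive_plus f g x df dg). Qed.

Lemma is_derive_Rminus (f g : R -> R) (x df dg : R) : is_derive f x df -> is_derive g x dg ->
  is_derive (fun y => f y - g y) x (df - dg).
Proof. exact (is_derive_minus f g x df dg). Qed.

Lemma is_derive_Rmult (f g : R -> R) (x df dg : R) : is_derive f x df -> is_derive g x dg ->
  is_derive (fun y => f y * g y) x (df * g x + f x * dg).
Proof. intros Hf Hg. apply (is_derive_mult f g); auto. intros; apply Rmult_comm. Qed.

Lemma is_derive_sqr (f : R -> R) (x df : R) : is_derive f x df ->
  is_derive (fun y => f y ^ 2) x (2 * f x * df).
Proof.
  intros Hf. apply (is_derive_ext (fun y => f y * f y)); [intros y; change (f y * f y = f y ^ 2); ring|].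
  eapply is_derive_value; [apply is_derive_Rmult; eassumption | ring].
Qed.

Lemma RInt_ext_R (f g : R -> R) a b : (forall x, Rmin a b < x < Rmax a b -> f x = g x) ->
  RInt f a b = RInt g a b.
Proof. exact (RInt_ext f g a b). Qed.

Lemma RInt_plus_R (f g : R -> R) a b : ex_RInt f a b -> ex_RInt g a b ->
  RInt (fun x => f x + g x) a b = RInt f a b + RInt g a b.
Proof. exact (RInt_plus f g a b). Qed.

Lemma RInt_scal_R (f : R -> R) (k a b : R) : ex_RInt f a b ->
  RInt (fun x => k * f x) a b = k * RInt f a b.
Proof. exact (RInt_scal f a b k). Qed.

Lemma ex_RInt_continuous_le (g : R -> R) a b : a <= b ->
  (forall x, a <= x <= b -> continuous g x) -> ex_RInt g a b.
Proof.
  intros Hab H. apply (ex_RInt_continuous g). intros x Hx.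
  rewrite Rmin_left, Rmax_right in Hx by exact Hab. auto.
Qed.

Lemma RInt_antiderivative (V W : R -> R) a b : a <= b ->
  (forall x, a <= x <= b -> is_derive V x (W x)) ->
  (forall x, a <= x <= b -> continuous W x) ->
  RInt W a b = V b - V a.
Proof.
  intros Hab HV HW. apply is_RInt_unique, (is_RInt_derive V W); intros x Hx;
    rewrite Rmin_left, Rmax_right in Hx by exact Hab; auto.
Qed.

Lemma const_of_derive_0_interior (g dg : R -> R) a b :
  (forall x, a <= x <= b -> is_derive g x (dg x)) ->
  (forall x, a <= x <= b -> continuous dg x) ->
  (forall x, a < x < b -> dg x = 0) ->
  forall x, a <= x <= b -> g x = g a.
Proof.
  intros Hg Hdg H0 x Hx.
  assert (E : RInt dg a x = g x - g a :> R)
    by (apply RInt_antiderivative; [lra | intros; apply Hg; lra | intros; apply Hdg; lra]).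
  rewrite (RInt_ext_R dg (fun _ => 0)), RInt_const in E.
  - change (scal (x - a) 0) with ((x - a) * 0) in E. lra.
  - intros y Hy. rewrite Rmin_left, Rmax_right in Hy by lra. apply H0. lra.
Qed.

Lemma RInt_gt_0_at (g : R -> R) a b c : a < c < b ->
  (forall x, a <= x <= b -> continuous g x) ->
  (forall x, a < x < b -> 0 <= g x) -> 0 < g c -> 0 < RInt g a b.
Proof.
  intros Hc Hcont Hpos Hgc.
  assert (Hnear : locally c (fun x => g c / 2 < g x)).
  { apply (Hcont c ltac:(lra)). apply (locally_interval _ _ (g c / 2) p_infty);
      simpl; auto; lra. }
  destruct Hnear as [del Hdel].
  set (a' := Rmax a (c - del / 2)). set (b' := Rmin b (c + del / 2)).
  pose proof (cond_pos del).
  assert (a <= a' < c) by (split; [apply Rmax_l | apply Rmax_lub_lt; lra]).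
  assert (c < b' <= b) by (split; [apply Rmin_glb_lt; lra | apply Rmin_l]).
  assert (Hint : forall u v, a <= u <= v -> v <= b -> ex_RInt g u v).
  { intros u v Hu Hv. apply ex_RInt_continuous_le; [lra | intros; apply Hcont; lra]. }
  assert (I1 : 0 <= RInt g a a').
  { apply RInt_ge_0; [lra | apply Hint; lra | intros; apply Hpos; lra]. }
  assert (I2 : 0 < RInt g a' b').
  { apply RInt_gt_0; [lra | | intros; apply Hcont; lra].
    intros x Hx. enough (g c / 2 < g x) by lra. apply Hdel.
    assert (c - del / 2 <= a') by apply Rmax_r. assert (b' <= c + del / 2) by apply Rmin_r.
    change (Rabs (x - c) < del). apply Rabs_def1; lra. }
  assert (I3 : 0 <= RInt g b' b).
  { apply RInt_ge_0; [lra | apply Hint; lra | intros; apply Hpos; lra]. }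
  rewrite <- (RInt_Chasles g a a' b), <- (RInt_Chasles g a' b' b) by (apply Hint; lra).
  change (0 < RInt g a a' + (RInt g a' b' + RInt g b' b)). lra.
Qed.

Lemma is_derive_eq0_at_local_min (f : R -> R) a b c (l : R) : a < c < b ->
  (forall x, a < x < b -> f c <= f x) -> is_derive f c l -> l = 0.
Proof.
  intros Hc Hmin Hd. apply is_derive_Reals in Hd.
  rewrite <- (derive_pt_eq_0 f c l (exist _ l Hd) Hd).
  apply (deriv_minimum f a b c); [lra | lra | intros; apply Hmin; lra].
Qed.

Lemma is_derive2_nonneg_at_local_min (f df : R -> R) a b c (l : R) : a < c < b ->
  (forall x, a < x < b -> f c <= f x) ->
  (forall x, a < x < b -> is_derive f x (df x)) ->
  is_derive df c l -> 0 <= l.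
Proof.
  intros Hc Hmin Hf Hdf.
  assert (Hdfc : df c = 0) by (apply (is_derive_eq0_at_local_min f a b c); auto).
  destruct (Rle_lt_dec 0 l) as [|Hl]; [assumption | exfalso].
  apply is_derive_Reals in Hdf. destruct (Hdf (- l / 2) ltac:(lra)) as [del Hdel].
  assert (Hneg : forall h, 0 < h < del -> df (c + h) < 0).
  { intros h Hh.
    assert (Hq := Hdel h ltac:(lra) ltac:(rewrite Rabs_right; lra)).
    rewrite Hdfc, Rminus_0_r in Hq. apply Rabs_def2 in Hq.
    assert (Hq' : df (c + h) / h < 0) by lra.
    unfold Rdiv in Hq'. pose proof (Rinv_0_lt_compat h ltac:(lra)). nra. }
  set (h := Rmin (del / 2) ((b - c) / 2)).
  pose proof (cond_pos del).
  assert (0 < h <= del / 2) by (split; [apply Rmin_glb_lt; lra | apply Rmin_l]).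
  assert (h <= (b - c) / 2) by apply Rmin_r.
  destruct (MVT_cor2 f df c (c + h)) as [x [Hx1 Hx2]]; [lra | |].
  - intros x Hx. apply is_derive_Reals, Hf. lra.
  - assert (df x < 0) by (replace x with (c + (x - c)) by ring; apply Hneg; lra).
    assert (f c <= f (c + h)) by (apply Hmin; lra).
    nra.
Qed.

Lemma Derive_periodic (g : R -> R) s : (forall v, g (v + 1) = g v) ->
  Derive g (s + 1) = Derive g s.
Proof.
  intros H. unfold Derive. f_equal. apply Lim_ext. intros h.
  replace (s + 1 + h) with (s + h + 1) by ring. rewrite !H. reflexivity.
Qed.

Lemma sumd_ext d f g : (forall i, (i < d)%nat -> f i = g i) -> sumd d f = sumd d g.
Proof. induction d as [|d IHd]; intros H; simpl; [reflexivity|]. rewrite IHd, H; auto. Qed.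

Lemma sumd_plus d f g : sumd d (fun i => f i + g i) = sumd d f + sumd d g.
Proof. induction d as [|d IHd]; simpl; [ring|]. rewrite IHd. ring. Qed.

Lemma sumd_scal d k f : sumd d (fun i => k * f i) = k * sumd d f.
Proof. induction d as [|d IHd]; simpl; [ring|]. rewrite IHd. ring. Qed.

Lemma sumd_nonneg d f : (forall i, (i < d)%nat -> 0 <= f i) -> 0 <= sumd d f.
Proof.
  induction d as [|d IHd]; intros H; simpl; [lra|].
  pose proof (IHd (fun i Hi => H i (Nat.lt_lt_succ_r _ _ Hi))). pose proof (H d (Nat.lt_succ_diag_r d)).
  lra.
Qed.

Lemma vnorm2_nonneg d v : 0 <= vnorm2 d v.
Proof. apply sumd_nonneg. intros; apply pow2_ge_0. Qed.

Lemma sumd_Cauchy_Schwarz d a b :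
  sumd d (fun i => a i * b i) ^ 2 <= sumd d (fun i => a i ^ 2) * sumd d (fun i => b i ^ 2).
Proof.
  set (A := sumd d (fun i => a i ^ 2)). set (B := sumd d (fun i => b i ^ 2)).
  set (C := sumd d (fun i => a i * b i)).
  assert (Hquad : forall x, 0 <= x ^ 2 * A + (-2 * x) * C + B).
  { intros x.
    unfold A, B, C. rewrite <- !sumd_scal, <- !sumd_plus. apply sumd_nonneg. intros i _.
    replace (x ^ 2 * a i ^ 2 + -2 * x * (a i * b i) + b i ^ 2) with ((x * a i - b i) ^ 2) by ring.
    apply pow2_ge_0. }
  assert (HA : 0 <= A) by (apply sumd_nonneg; intros; apply pow2_ge_0).
  destruct (Req_dec A 0) as [HA0|HA0].
  - assert (HC : C = 0).
    { destruct (Req_dec C 0) as [|HC]; [assumption|].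
      specialize (Hquad ((B + 1) / (2 * C))). rewrite HA0 in Hquad.
      replace (-2 * ((B + 1) / (2 * C)) * C) with (- (B + 1)) in Hquad by (field; exact HC).
      lra. }
    rewrite HA0, HC. lra.
  - specialize (Hquad (C / A)).
    replace ((C / A) ^ 2 * A + -2 * (C / A) * C + B) with (B - C ^ 2 / A) in Hquad by (field; exact HA0).
    apply (Rmult_le_compat_r A) in Hquad; [|exact HA].
    replace ((B - C ^ 2 / A) * A) with (A * B - C ^ 2) in Hquad by (field; exact HA0).
    lra.
Qed.

Lemma is_derive_sumd d (F : nat -> R -> R) (dF : nat -> R) (x : R) :
  (forall i, (i < d)%nat -> is_derive (F i) x (dF i)) ->
  is_derive (fun y => sumd d (fun i => F i y)) x (sumd d dF).
Proof.
  induction d as [|d IHd]; intros H; simpl.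
  - apply (is_derive_const 0 x).
  - apply is_derive_Rplus; auto.
Qed.

Lemma is_derive_vnorm2 d (v : nat -> R -> R) (dv : nat -> R) (x : R) :
  (forall i, (i < d)%nat -> is_derive (v i) x (dv i)) ->
  is_derive (fun y => vnorm2 d (fun i => v i y)) x (2 * sumd d (fun i => v i x * dv i)).
Proof.
  intros H. eapply is_derive_value.
  - apply (is_derive_sumd d (fun i y => v i y ^ 2)). intros i Hi. apply is_derive_sqr, H, Hi.
  - rewrite <- sumd_scal. apply sumd_ext. intros; ring.
Qed.

Lemma in_time_locally tstar t : in_time tstar t -> locally t (in_time tstar).
Proof.
  intros [Ht0 Htb]. destruct tstar as [b| |]; simpl in Htb; try contradiction.
  - assert (Hdel : 0 < Rmin t (b - t)) by (apply Rmin_glb_lt; lra).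
    exists (mkposreal _ Hdel). intros u Hu.
    change (Rabs (u - t) < Rmin t (b - t)) in Hu. apply Rabs_def2 in Hu.
    pose proof (Rmin_l t (b - t)). pose proof (Rmin_r t (b - t)).
    split; simpl; lra.
  - exists (mkposreal _ Ht0). intros u Hu.
    change (Rabs (u - t) < t) in Hu. apply Rabs_def2 in Hu.
    split; simpl; [lra | exact I].
Qed.

Lemma in_time_locally_fst tstar t s : in_time tstar t ->
  locally (t, s) (fun p : R * R => in_time tstar (fst p)).
Proof.
  intros Ht. destruct (in_time_locally _ _ Ht) as [del Hdel].
  exists del. intros [u v] [Hu _]. exact (Hdel u Hu).
Qed.

Lemma Ck_continuous k tstar f t s : Ck k tstar f -> in_time tstar t ->
  continuous (fun p : R * R => f (fst p) (snd p)) (t, s).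
Proof. destruct k; intros Hf Ht; apply Hf, Ht. Qed.

Lemma Ck_pred k tstar f : Ck (S k) tstar f -> Ck k tstar f.
Proof.
  revert f; induction k as [|k IHk]; intros f Hf; [exact (proj1 Hf)|].
  destruct Hf as (Hc & Hd & Ht & Hs).
  split; [exact Hc|]. split; [exact Hd|]. split; apply IHk; assumption.
Qed.

Lemma Ck_ext k tstar f g : (forall t s, in_time tstar t -> f t s = g t s) ->
  Ck k tstar f -> Ck k tstar g.
Proof.
  revert f g; induction k as [|k IHk]; intros f g Hfg Hf;
  assert (Hcont : forall t s, in_time tstar t ->
         continuous (fun p : R * R => f (fst p) (snd p)) (t, s) ->
         continuous (fun p : R * R => g (fst p) (snd p)) (t, s))
    by (intros t s Ht; apply continuous_ext_loc;
        exact (filter_imp _ _ (fun p Hp => Hfg _ _ Hp) (in_time_locally_fst _ _ s Ht))).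
  - intros t s Ht. exact (Hcont t s Ht (Hf t s Ht)).
  - destruct Hf as (Hc & Hd & Hdt & Hds).
    split; [intros t s Ht; exact (Hcont t s Ht (Hc t s Ht))|].
    split; [|split].
    + intros t s Ht. destruct (Hd t s Ht) as [Hdu Hdv]. split.
      * apply (ex_derive_ext_loc (fun u => f u s)); [|exact Hdu].
        exact (filter_imp _ _ (fun u Hu => Hfg u s Hu) (in_time_locally _ _ Ht)).
      * apply (ex_derive_ext (fun v => f t v)); [intros v; apply Hfg, Ht | exact Hdv].
    + apply (IHk (dt f)); [|exact Hdt]. intros t s Ht. apply Derive_ext_loc.
      exact (filter_imp _ _ (fun u Hu => Hfg u s Hu) (in_time_locally _ _ Ht)).
    + apply (IHk (ds f)); [|exact Hds]. intros t s Ht. apply Derive_ext.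
      intros v; apply Hfg, Ht.
Qed.

Lemma Ck_const k tstar c : Ck k tstar (fun _ _ => c).
Proof.
  revert c; induction k as [|k IHk]; intros c.
  - intros t s _. apply continuous_const.
  - split; [intros t s _; apply continuous_const|].
    split; [intros t s _; split; apply ex_derive_const|].
    split; apply (Ck_ext _ _ (fun _ _ => 0)); try apply IHk;
      intros t s _; symmetry; apply (Derive_const c).
Qed.

Lemma Ck_plus k tstar f g : Ck k tstar f -> Ck k tstar g ->
  Ck k tstar (fun t s => f t s + g t s).
Proof.
  revert f g; induction k as [|k IHk]; intros f g Hf Hg.
  all: assert (Hcont : forall t s, in_time tstar t ->
         continuous (fun p : R * R => f (fst p) (snd p) + g (fst p) (snd p)) (t, s))
    by (intros t s Ht; apply (continuous_plus (fun p : R * R => f (fst p) (snd p))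
          (fun p : R * R => g (fst p) (snd p))); eapply Ck_continuous; eassumption).
  - exact Hcont.
  - destruct Hf as (_ & Fd & Fdt & Fds), Hg as (_ & Gd & Gdt & Gds).
    split; [exact Hcont|]. split; [|split].
    + intros t s Ht. destruct (Fd t s Ht), (Gd t s Ht).
      split; [apply (ex_derive_plus (fun u => f u s) (fun u => g u s))
             |apply (ex_derive_plus (fun v => f t v) (fun v => g t v))]; assumption.
    + apply (Ck_ext _ _ (fun t s => dt f t s + dt g t s)); [|apply IHk; assumption].
      intros t s Ht. symmetry. apply (Derive_plus (fun u => f u s) (fun u => g u s));
        [exact (proj1 (Fd t s Ht)) | exact (proj1 (Gd t s Ht))].
    + apply (Ck_ext _ _ (fun t s => ds f t s + ds g t s)); [|apply IHk; assumption].
      intros t s Ht. symmetry. apply (Derive_plus (fun v => f t v) (fun v => g t v));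
        [exact (proj2 (Fd t s Ht)) | exact (proj2 (Gd t s Ht))].
Qed.

Lemma Ck_mult k tstar f g : Ck k tstar f -> Ck k tstar g ->
  Ck k tstar (fun t s => f t s * g t s).
Proof.
  revert f g; induction k as [|k IHk]; intros f g Hf Hg.
  all: assert (Hcont : forall t s, in_time tstar t ->
         continuous (fun p : R * R => f (fst p) (snd p) * g (fst p) (snd p)) (t, s))
    by (intros t s Ht; apply (continuous_mult (fun p : R * R => f (fst p) (snd p))
          (fun p : R * R => g (fst p) (snd p))); eapply Ck_continuous; eassumption).
  - exact Hcont.
  - pose proof (Ck_pred _ _ _ Hf) as Hf'. pose proof (Ck_pred _ _ _ Hg) as Hg'.
    destruct Hf as (_ & Fd & Fdt & Fds), Hg as (_ & Gd & Gdt & Gds).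
    split; [exact Hcont|]. split; [|split].
    + intros t s Ht. destruct (Fd t s Ht), (Gd t s Ht).
      split; [apply (ex_derive_mult (fun u => f u s) (fun u => g u s))
             |apply (ex_derive_mult (fun v => f t v) (fun v => g t v))]; assumption.
    + apply (Ck_ext _ _ (fun t s => dt f t s * g t s + f t s * dt g t s));
        [|apply Ck_plus; apply IHk; assumption].
      intros t s Ht. symmetry. apply (Derive_mult (fun u => f u s) (fun u => g u s));
        [exact (proj1 (Fd t s Ht)) | exact (proj1 (Gd t s Ht))].
    + apply (Ck_ext _ _ (fun t s => ds f t s * g t s + f t s * ds g t s));
        [|apply Ck_plus; apply IHk; assumption].
      intros t s Ht. symmetry. apply (Derive_mult (fun v => f t v) (fun v => g t v));
        [exact (proj2 (Fd t s Ht)) | exact (proj2 (Gd t s Ht))].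
Qed.

Lemma smooth_dt tstar f : smooth tstar f -> smooth tstar (dt f).
Proof. intros H k. exact (proj1 (proj2 (proj2 (H (S k))))). Qed.

Lemma smooth_ds tstar f : smooth tstar f -> smooth tstar (ds f).
Proof. intros H k. exact (proj2 (proj2 (proj2 (H (S k))))). Qed.

Lemma smooth_ext tstar f g : (forall t s, in_time tstar t -> f t s = g t s) ->
  smooth tstar f -> smooth tstar g.
Proof. intros E Hf k. exact (Ck_ext _ _ _ _ E (Hf k)). Qed.

Lemma smooth_const tstar c : smooth tstar (fun _ _ => c).
Proof. intros k. apply Ck_const. Qed.

Lemma smooth_plus tstar f g : smooth tstar f -> smooth tstar g ->
  smooth tstar (fun t s => f t s + g t s).
Proof. intros Hf Hg k. apply Ck_plus; auto. Qed.

Lemma smooth_mult tstar f g : smooth tstar f -> smooth tstar g ->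
  smooth tstar (fun t s => f t s * g t s).
Proof. intros Hf Hg k. apply Ck_mult; auto. Qed.

Lemma smooth_minus tstar f g : smooth tstar f -> smooth tstar g ->
  smooth tstar (fun t s => f t s - g t s).
Proof.
  intros Hf Hg. apply (smooth_ext _ (fun t s => f t s + (-1) * g t s)); [intros; ring|].
  apply smooth_plus, smooth_mult; auto. apply smooth_const.
Qed.

Lemma smooth_sumd tstar d (F : nat -> R -> R -> R) :
  (forall i, (i < d)%nat -> smooth tstar (F i)) ->
  smooth tstar (fun t s => sumd d (fun i => F i t s)).
Proof.
  induction d as [|d IHd]; intros H; simpl.
  - apply smooth_const.
  - apply (smooth_plus _ (fun t s => sumd d (fun i => F i t s)) (F d)); auto.
Qed.

Lemma smooth_ex_derive_t tstar f t s : smooth tstar f -> in_time tstar t ->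
  ex_derive (fun u => f u s) t.
Proof. intros H Ht. exact (proj1 (proj1 (proj2 (H 1%nat)) t s Ht)). Qed.

Lemma smooth_ex_derive_s tstar f t s : smooth tstar f -> in_time tstar t ->
  ex_derive (fun v => f t v) s.
Proof. intros H Ht. exact (proj2 (proj1 (proj2 (H 1%nat)) t s Ht)). Qed.

Lemma smooth_is_derive_t tstar f t s : smooth tstar f -> in_time tstar t ->
  is_derive (fun u => f u s) t (dt f t s).
Proof. intros H Ht. apply Derive_correct, (smooth_ex_derive_t tstar); assumption. Qed.

Lemma smooth_is_derive_s tstar f t s : smooth tstar f -> in_time tstar t ->
  is_derive (fun v => f t v) s (ds f t s).
Proof. intros H Ht. apply Derive_correct, (smooth_ex_derive_s tstar); assumption. Qed.

Lemma smooth_continuous_s tstar f t s : smooth tstar f -> in_time tstar t ->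
  continuous (fun v => f t v) s.
Proof. intros H Ht. apply (ex_derive_continuous (fun v => f t v)), (smooth_ex_derive_s tstar); assumption. Qed.

Lemma smooth_ex_RInt tstar f t : smooth tstar f -> in_time tstar t ->
  ex_RInt (fun s => f t s) 0 1.
Proof.
  intros H Ht. apply ex_RInt_continuous_le; [lra|].
  intros; apply (smooth_continuous_s tstar); assumption.
Qed.

Lemma smooth_continuity_2d tstar f t s : smooth tstar f -> in_time tstar t ->
  continuity_2d_pt f t s.
Proof. intros H Ht. apply continuity_2d_pt_filterlim, (Ck_continuous 0 tstar), Ht. apply H. Qed.

Lemma smooth_schwarz tstar f t s : smooth tstar f -> in_time tstar t ->
  dt (ds f) t s = ds (dt f) t s.
Proof.
  intros Hf Ht. apply Schwarz.
  - destruct (in_time_locally _ _ Ht) as [del Hdel]. exists del.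
    intros u v Hu _. specialize (Hdel u Hu).
    repeat split.
    + exact (smooth_ex_derive_t _ _ _ _ Hf Hdel).
    + exact (smooth_ex_derive_s _ _ _ _ Hf Hdel).
    + exact (smooth_ex_derive_t _ _ _ _ (smooth_ds _ _ Hf) Hdel).
    + exact (smooth_ex_derive_s _ _ _ _ (smooth_dt _ _ Hf) Hdel).
  - exact (smooth_continuity_2d _ _ _ _ (smooth_dt _ _ (smooth_ds _ _ Hf)) Ht).
  - exact (smooth_continuity_2d _ _ _ _ (smooth_ds _ _ (smooth_dt _ _ Hf)) Ht).
Qed.

Lemma smooth_schwarz_ds_ds tstar f t s : smooth tstar f -> in_time tstar t ->
  dt (ds (ds f)) t s = ds (ds (dt f)) t s.
Proof.
  intros Hf Ht. rewrite (smooth_schwarz _ _ _ _ (smooth_ds _ _ Hf) Ht).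
  apply Derive_ext. intros v. apply (smooth_schwarz tstar); assumption.
Qed.

Lemma periodic1_ds f : periodic1 f -> periodic1 (ds f).
Proof. intros H t s. apply Derive_periodic. intros v; apply H. Qed.

Lemma periodic1_dt f : periodic1 f -> periodic1 (dt f).
Proof. intros H t s. apply Derive_ext. intros u; apply H. Qed.

Lemma periodic1_mult f g : periodic1 f -> periodic1 g -> periodic1 (fun t s => f t s * g t s).
Proof. intros Hf Hg t s. rewrite Hf, Hg. reflexivity. Qed.

(** * A maximum principle for periodic solutions of σ'' = w σ - k *)

Section PeriodicMaximumPrinciple.

Variables (f f' f'' w : R -> R) (k : R).
Hypothesis f_periodic : forall s, f (s + 1) = f s.
Hypothesis f_derive : forall s, is_derive f s (f' s).
Hypothesis f'_derive : forall s, is_derive f' s (f'' s).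
Hypothesis w_continuous : forall s, continuous w s.
Hypothesis f''_eq : forall s, f'' s = w s * f s - k.

Let energy s := w s * f s ^ 2 + f' s ^ 2.

Lemma derivative_periodic s : f' (s + 1) = f' s.
Proof.
  rewrite <- (is_derive_unique f (s + 1) _ (f_derive _)), <- (is_derive_unique f s _ (f_derive _)).
  apply Derive_periodic, f_periodic.
Qed.

Lemma continuous_energy s : continuous energy s.
Proof.
  apply (continuous_plus (fun s => w s * f s ^ 2) (fun s => f' s ^ 2)).
  - apply (continuous_mult w (fun s => f s ^ 2)); [apply w_continuous|].
    eapply is_derive_continuous, is_derive_sqr, f_derive.
  - eapply is_derive_continuous, is_derive_sqr, f'_derive.
Qed.

Lemma RInt_energy : RInt energy 0 1 = k * RInt f 0 1 :> R.
Proof.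
  assert (Hf : forall s, continuous f s) by (intros; eapply is_derive_continuous, f_derive).
  assert (Hdiff : forall s, is_derive (fun x => f x * f' x) s (energy s - k * f s)).
  { intros s. eapply is_derive_value; [apply is_derive_Rmult; [apply f_derive | apply f'_derive]|].
    unfold energy. rewrite f''_eq. ring. }
  assert (Hkf : forall s, continuous (fun x => k * f x) s)
    by (intros; apply (continuous_scal_r k f), Hf).
  assert (Hcont : forall s, continuous (fun x => energy x - k * f x) s)
    by (intros; apply (continuous_minus energy (fun x => k * f x)); auto using continuous_energy).
  assert (Hint : forall g : R -> R, (forall s, continuous g s) -> ex_RInt g 0 1)
    by (intros g Hg; apply ex_RInt_continuous_le; [lra | auto]).
  rewrite (RInt_ext_R energy (fun s => (energy s - k * f s) + k * f s)) by (intros; ring).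
  rewrite RInt_plus_R, RInt_scal_R by (apply Hint; auto).
  rewrite (RInt_antiderivative (fun x => f x * f' x)) by (try lra; auto).
  replace 1 with (0 + 1) at 1 2 by ring. rewrite f_periodic, derivative_periodic. ring.
Qed.

Hypothesis w_nonneg : forall s, 0 <= w s.
Hypothesis f_mean : RInt f 0 1 = 1.

Lemma energy_nonneg s : 0 <= energy s.
Proof.
  unfold energy. pose proof (w_nonneg s). pose proof (pow2_ge_0 (f s)).
  pose proof (pow2_ge_0 (f' s)). nra.
Qed.

Lemma periodic_solution_nonneg s : 0 <= s <= 1 -> 0 <= f s.
Proof.
  assert (Hf : forall s, continuous f s) by (intros; eapply is_derive_continuous, f_derive).
  destruct (continuity_ab_min f 0 1) as [s0 [Hmin Hs0]];
    [lra | intros; apply continuity_pt_filterlim, Hf|].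
  intros Hs. enough (0 <= f s0) by (specialize (Hmin s Hs); lra).
  destruct (Rle_lt_dec 0 (f s0)) as [|Hneg]; [assumption | exfalso].
  assert (Hmin' : forall x, -1 < x < 2 -> f s0 <= f x).
  { intros x Hx. destruct (Rle_lt_dec 0 x); [destruct (Rle_lt_dec x 1)|].
    - apply Hmin; lra.
    - replace x with (x - 1 + 1) by ring. rewrite f_periodic. apply Hmin; lra.
    - rewrite <- (f_periodic x). apply Hmin; lra. }
  assert (Hk : k <= 0).
  { assert (0 <= f'' s0).
    { apply (is_derive2_nonneg_at_local_min f f' (-1) 2 s0); auto; lra. }
    pose proof (w_nonneg s0). rewrite f''_eq in *. nra. }
  assert (Hflat : forall x, 0 < x < 1 -> f' x = 0).
  { intros x Hx. destruct (Req_dec (f' x) 0) as [|Hx']; [assumption | exfalso].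
    assert (0 < RInt energy 0 1).
    { apply (RInt_gt_0_at _ 0 1 x); auto using continuous_energy, energy_nonneg.
      unfold energy. pose proof (w_nonneg x). pose proof (pow2_ge_0 (f x)).
      pose proof (pow2_gt_0 _ Hx'). nra. }
    rewrite RInt_energy, f_mean in *. lra. }
  assert (Hconst : forall x, 0 <= x <= 1 -> f x = f 0).
  { apply (const_of_derive_0_interior f f'); [auto | | exact Hflat].
    intros; eapply is_derive_continuous, f'_derive. }
  rewrite (RInt_ext_R f (fun _ => f 0)), RInt_const in f_mean
    by (intros y Hy; rewrite Rmin_left, Rmax_right in Hy by lra; apply Hconst; lra).
  change (scal (1 - 0) (f 0)) with ((1 - 0) * f 0) in f_mean.
  rewrite (Hconst s0 Hs0) in Hneg. lra.
Qed.

End PeriodicMaximumPrinciple.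

(** * The uniformly compressing flow *)

Section UniformlyCompressingFlow.

Variables (d : nat) (tstar : Rbar) (eta : nat -> R -> R -> R) (sigma : R -> R -> R).
Hypothesis flow : UCCSF d tstar eta sigma.

Local Notation L := (curve_length d eta).
Local Notation K u := (RInt (fun s => sigma u s * curv2 d eta u s) 0 1).

Let flux i u s := sigma u s * ds (eta i) u s.

Lemma eta_smooth i : (i < d)%nat -> smooth tstar (eta i).
Proof. destruct flow as (Heta & _). intros Hi. apply (Heta i Hi). Qed.

Lemma eta_periodic i : (i < d)%nat -> periodic1 (eta i).
Proof. destruct flow as (Heta & _). intros Hi. apply (Heta i Hi). Qed.

Lemma sigma_smooth : smooth tstar sigma.
Proof. apply flow. Qed.

Lemma sigma_periodic : periodic1 sigma.
Proof. apply flow. Qed.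

Lemma length_pos u : in_time tstar u -> 0 < L u.
Proof. destruct flow as (_ & _ & _ & Hflow). intros Hu. apply (Hflow u Hu). Qed.

Lemma tangent_norm2 u s : in_time tstar u ->
  vnorm2 d (fun i => ds (eta i) u s) = L u ^ 2.
Proof.
  destruct flow as (_ & _ & _ & Hflow). intros Hu.
  destruct (Hflow u Hu) as (_ & _ & Hnorm & _).
  rewrite <- (Hnorm s). unfold vnorm. rewrite pow2_sqrt; [reflexivity | apply vnorm2_nonneg].
Qed.

Lemma eta_dt i u s : (i < d)%nat -> in_time tstar u ->
  dt (eta i) u s = / L u ^ 2 * ds (flux i) u s.
Proof.
  destruct flow as (_ & _ & _ & Hflow). intros Hi Hu.
  destruct (Hflow u Hu) as (_ & _ & _ & Heq & _). apply (Heq i s Hi).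
Qed.

Lemma sigma_ds_ds u s : in_time tstar u ->
  ds (ds sigma) u s = / L u ^ 2 * sigma u s * curv2 d eta u s - / L u ^ 2 * K u.
Proof.
  destruct flow as (_ & _ & _ & Hflow). intros Hu.
  destruct (Hflow u Hu) as (_ & _ & _ & _ & Heq & _). specialize (Heq s). lra.
Qed.

Lemma sigma_mean u : in_time tstar u -> RInt (fun s => sigma u s) 0 1 = 1.
Proof. destruct flow as (_ & _ & _ & Hflow). intros Hu. apply (Hflow u Hu). Qed.

Lemma flux_smooth i : (i < d)%nat -> smooth tstar (flux i).
Proof. intros Hi. apply smooth_mult; [apply sigma_smooth | apply smooth_ds, eta_smooth, Hi]. Qed.

Lemma curv2_smooth : smooth tstar (curv2 d eta).
Proof.
  apply (smooth_sumd _ d (fun i u s => ds (ds (eta i)) u s ^ 2)). intros i Hi.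
  apply (smooth_ext _ (fun u s => ds (ds (eta i)) u s * ds (ds (eta i)) u s)); [intros; ring|].
  apply smooth_mult; apply smooth_ds, smooth_ds, eta_smooth, Hi.
Qed.

Lemma tangent_dot_curvature u s : in_time tstar u ->
  sumd d (fun i => ds (eta i) u s * ds (ds (eta i)) u s) = 0.
Proof.
  intros Hu.
  assert (H : is_derive (fun v => vnorm2 d (fun i => ds (eta i) u v)) s 0).
  { apply (is_derive_ext (fun _ => L u ^ 2)); [intros v; symmetry; apply tangent_norm2, Hu|].
    apply (is_derive_const (L u ^ 2) s). }
  apply is_derive_unique in H. rewrite (is_derive_unique _ _ _ (is_derive_vnorm2 d _
    (fun i => ds (ds (eta i)) u s) s (fun i Hi => smooth_is_derive_s _ _ _ _
       (smooth_ds _ _ (eta_smooth i Hi)) Hu))) in H.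
  lra.
Qed.

Lemma tangent_dot_ds_curvature u s : in_time tstar u ->
  sumd d (fun i => ds (eta i) u s * ds (ds (ds (eta i))) u s) = - curv2 d eta u s.
Proof.
  intros Hu.
  assert (H : is_derive (fun v => sumd d (fun i => ds (eta i) u v * ds (ds (eta i)) u v)) s 0).
  { apply (is_derive_ext (fun _ => 0)); [intros v; symmetry; apply tangent_dot_curvature, Hu|].
    apply (is_derive_const 0 s). }
  apply is_derive_unique in H.
  rewrite (is_derive_unique _ _ _ (is_derive_sumd d
    (fun i v => ds (eta i) u v * ds (ds (eta i)) u v) _ s (fun i Hi => is_derive_Rmult _ _ _ _ _
      (smooth_is_derive_s _ _ _ _ (smooth_ds _ _ (eta_smooth i Hi)) Hu)
      (smooth_is_derive_s _ _ _ _ (smooth_ds _ _ (smooth_ds _ _ (eta_smooth i Hi))) Hu)))) in H.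
  rewrite (sumd_ext d _ (fun i => ds (ds (eta i)) u s ^ 2 + ds (eta i) u s * ds (ds (ds (eta i))) u s))
    in H by (intros; ring).
  rewrite sumd_plus in H. unfold curv2, vnorm2. lra.
Qed.

Lemma is_derive_length2_at u s : in_time tstar u ->
  is_derive (fun w => L w ^ 2) u (2 * sumd d (fun i => ds (eta i) u s * dt (ds (eta i)) u s)).
Proof.
  intros Hu.
  apply (is_derive_ext_loc (fun w => vnorm2 d (fun i => ds (eta i) w s))).
  - apply (filter_imp _ _ (fun w Hw => tangent_norm2 w s Hw) (in_time_locally _ _ Hu)).
  - apply (is_derive_vnorm2 d (fun i w => ds (eta i) w s)). intros i Hi.
    apply (smooth_is_derive_t tstar); [apply smooth_ds, eta_smooth, Hi | exact Hu].
Qed.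

Lemma flux_ds_ds i u s : (i < d)%nat -> in_time tstar u ->
  ds (ds (flux i)) u s = ds (ds sigma) u s * ds (eta i) u s
    + 2 * ds sigma u s * ds (ds (eta i)) u s + sigma u s * ds (ds (ds (eta i))) u s.
Proof.
  intros Hi Hu.
  pose proof (smooth_ds _ _ (eta_smooth i Hi)) as Hs1.
  pose proof (smooth_ds _ _ Hs1) as Hs2.
  pose proof (smooth_ds _ _ sigma_smooth) as Hsig1.
  assert (Hds : forall v, ds (flux i) u v = ds sigma u v * ds (eta i) u v + sigma u v * ds (ds (eta i)) u v).
  { intros v. apply (Derive_mult (fun v => sigma u v) (fun v => ds (eta i) u v));
      apply (smooth_ex_derive_s tstar); auto using sigma_smooth. }
  unfold ds at 1. rewrite (Derive_ext _ _ _ Hds). apply is_derive_unique.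
  eapply is_derive_value.
  - apply is_derive_Rplus; apply is_derive_Rmult; apply (smooth_is_derive_s tstar);
      auto using sigma_smooth.
  - ring.
Qed.

Lemma tangent_dt i u s : (i < d)%nat -> in_time tstar u ->
  dt (ds (eta i)) u s = / L u ^ 2 * ds (ds (flux i)) u s.
Proof.
  intros Hi Hu. rewrite (smooth_schwarz _ _ _ _ (eta_smooth i Hi) Hu).
  unfold ds at 1. rewrite (Derive_ext _ _ _ (fun v => eta_dt i u v Hi Hu)).
  apply Derive_scal.
Qed.

Lemma is_derive_length2 u : in_time tstar u ->
  is_derive (fun w => L w ^ 2) u (-2 * K u / L u ^ 2).
Proof.
  intros Hu. eapply is_derive_value; [apply (is_derive_length2_at u 0 Hu)|].
  pose proof (length_pos u Hu).
  rewrite (sumd_ext d _ (fun i => 1 / L u ^ 2 * (ds (ds sigma) u 0 * ds (eta i) u 0 ^ 2)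
     + 2 / L u ^ 2 * ds sigma u 0 * (ds (eta i) u 0 * ds (ds (eta i)) u 0)
     + / L u ^ 2 * sigma u 0 * (ds (eta i) u 0 * ds (ds (ds (eta i))) u 0)))
    by (intros i Hi; rewrite tangent_dt, flux_ds_ds by auto; field; lra).
  rewrite !sumd_plus, !sumd_scal, tangent_dot_curvature, tangent_dot_ds_curvature by exact Hu.
  change (sumd d (fun i => ds (eta i) u 0 ^ 2)) with (vnorm2 d (fun i => ds (eta i) u 0)).
  rewrite tangent_norm2, sigma_ds_ds by exact Hu.
  field. lra.
Qed.

Lemma is_derive_length u : in_time tstar u -> is_derive L u (- / L u ^ 3 * K u).
Proof.
  intros Hu. pose proof (length_pos u Hu).
  apply (is_derive_ext_loc (fun w => sqrt (L w ^ 2))).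
  - apply (filter_imp _ _ (fun w Hw => sqrt_pow2 _ (Rlt_le _ _ (length_pos w Hw)))
      (in_time_locally _ _ Hu)).
  - eapply is_derive_value; [apply is_derive_sqrt; [apply is_derive_length2, Hu | apply pow_lt; lra]|].
    cbv beta. rewrite sqrt_pow2 by lra. field. lra.
Qed.

Lemma sigma_nonneg u s : in_time tstar u -> 0 <= s <= 1 -> 0 <= sigma u s.
Proof.
  intros Hu. pose proof (length_pos u Hu).
  apply (periodic_solution_nonneg (sigma u) (ds sigma u) (ds (ds sigma) u)
           (fun v => / L u ^ 2 * curv2 d eta u v) (/ L u ^ 2 * K u)).
  - intros v. apply sigma_periodic.
  - intros v. apply (smooth_is_derive_s tstar); [apply sigma_smooth | exact Hu].
  - intros v. apply (smooth_is_derive_s tstar); [apply smooth_ds, sigma_smooth | exact Hu].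
  - intros v. apply (continuous_scal_r (/ L u ^ 2) (fun v => curv2 d eta u v)).
    apply (smooth_continuous_s tstar); [apply curv2_smooth | exact Hu].
  - intros v. rewrite sigma_ds_ds by exact Hu. ring.
  - intros v. apply Rmult_le_pos; [left; apply Rinv_0_lt_compat, pow_lt; lra | apply vnorm2_nonneg].
  - apply sigma_mean, Hu.
Qed.

Lemma tangent_dot_tangent_dt u s : in_time tstar u ->
  sumd d (fun i => ds (eta i) u s * dt (ds (eta i)) u s) = - K u / L u ^ 2.
Proof.
  intros Hu. pose proof (length_pos u Hu).
  pose proof (is_derive_unique _ _ _ (is_derive_length2_at u s Hu)) as E.
  rewrite (is_derive_unique _ _ _ (is_derive_length2 u Hu)) in E.
  field_simplify; [|lra]. field_simplify in E; lra.
Qed.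

Lemma is_derive_Derive_length2 t s : in_time tstar t ->
  is_derive (Derive (fun w => L w ^ 2)) t
    (2 * sumd d (fun i => dt (ds (eta i)) t s ^ 2 + ds (eta i) t s * dt (dt (ds (eta i))) t s)).
Proof.
  intros Ht.
  apply (is_derive_ext_loc (fun w => 2 * sumd d (fun i => ds (eta i) w s * dt (ds (eta i)) w s))).
  - apply (filter_imp _ _ (fun w Hw => eq_sym (is_derive_unique _ _ _ (is_derive_length2_at w s Hw)))
      (in_time_locally _ _ Ht)).
  - apply (is_derive_scal (fun w => sumd d (fun i => ds (eta i) w s * dt (ds (eta i)) w s))).
    eapply is_derive_value.
    + apply (is_derive_sumd d (fun i w => ds (eta i) w s * dt (ds (eta i)) w s)). intros i Hi.
      apply is_derive_Rmult; apply (smooth_is_derive_t tstar); auto using smooth_ds, smooth_dt, eta_smooth.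
    + apply sumd_ext. intros. ring.
Qed.

Lemma flux_dt i t s : (i < d)%nat -> in_time tstar t ->
  dt (flux i) t s = dt sigma t s * ds (eta i) t s + sigma t s * dt (ds (eta i)) t s.
Proof.
  intros Hi Ht. apply (Derive_mult (fun u => sigma u s) (fun u => ds (eta i) u s));
    apply (smooth_ex_derive_t tstar); auto using sigma_smooth, smooth_ds, eta_smooth.
Qed.

Lemma tangent_dt_dt i t s : (i < d)%nat -> in_time tstar t ->
  dt (dt (ds (eta i))) t s
  = 2 * K t / L t ^ 4 * dt (ds (eta i)) t s + / L t ^ 2 * ds (ds (dt (flux i))) t s.
Proof.
  intros Hi Ht. pose proof (length_pos t Ht).
  pose proof (smooth_ds _ _ (smooth_ds _ _ (flux_smooth i Hi))) as Hh2.
  unfold dt at 1.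
  rewrite (Derive_ext_loc _ (fun w => / L w ^ 2 * ds (ds (flux i)) w s))
    by (apply (filter_imp _ _ (fun w Hw => tangent_dt i w s Hi Hw) (in_time_locally _ _ Ht))).
  apply is_derive_unique. eapply is_derive_value.
  - apply is_derive_Rmult.
    + apply (is_derive_inv (fun w => L w ^ 2)); [apply is_derive_length2, Ht | apply pow_nonzero; lra].
    + apply (smooth_is_derive_t tstar); assumption.
  - rewrite (smooth_schwarz_ds_ds tstar), (tangent_dt i t s Hi Ht) by auto using flux_smooth.
    field. lra.
Qed.

Lemma RInt_dt_sigma t : in_time tstar t -> RInt (fun s => dt sigma t s) 0 1 = 0.
Proof.
  intros Ht.
  assert (D : is_derive (fun u => RInt (fun s => sigma u s) 0 1) t (RInt (fun s => dt sigma t s) 0 1)).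
  { apply (is_derive_RInt_param sigma 0 1 t).
    - apply (filter_imp _ _ (fun u Hu s _ => smooth_ex_derive_t _ _ u s sigma_smooth Hu)
        (in_time_locally _ _ Ht)).
    - intros s _. exact (smooth_continuity_2d _ _ _ _ (smooth_dt _ _ sigma_smooth) Ht).
    - exact (filter_imp _ _ (fun u Hu => smooth_ex_RInt _ _ u sigma_smooth Hu) (in_time_locally _ _ Ht)). }
  rewrite <- (is_derive_unique _ _ _ D). apply is_derive_unique.
  apply (is_derive_ext_loc (fun _ => 1)); [|apply (is_derive_const 1 t)].
  apply (filter_imp _ _ (fun u Hu => eq_sym (sigma_mean u Hu)) (in_time_locally _ _ Ht)).
Qed.

(* The [s]-derivative of the Wronskian [h ∂_s∂_t h - ∂_s h ∂_t h] of the flux [h] and of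
   [∂_t h]. *)
Let flux_wronskian_ds t s := sumd d (fun i =>
  flux i t s * ds (ds (dt (flux i))) t s - ds (ds (flux i)) t s * dt (flux i) t s).

Lemma flux_wronskian_ds_smooth : smooth tstar flux_wronskian_ds.
Proof.
  apply (smooth_sumd _ d (fun i t s =>
    flux i t s * ds (ds (dt (flux i))) t s - ds (ds (flux i)) t s * dt (flux i) t s)).
  intros i Hi. pose proof (flux_smooth i Hi).
  apply smooth_minus; apply smooth_mult; auto using smooth_ds, smooth_dt.
Qed.

Lemma RInt_flux_wronskian_ds t : in_time tstar t ->
  RInt (fun s => flux_wronskian_ds t s) 0 1 = 0.
Proof.
  intros Ht.
  assert (Hh : forall i, (i < d)%nat -> periodic1 (flux i))
    by (intros; apply periodic1_mult; [apply sigma_periodic | apply periodic1_ds, eta_periodic; auto]).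
  rewrite (RInt_antiderivative (fun s => sumd d (fun i =>
      flux i t s * ds (dt (flux i)) t s - ds (flux i) t s * dt (flux i) t s)));
    [| lra | | intros; apply (smooth_continuous_s tstar); auto using flux_wronskian_ds_smooth].
  - replace 1 with (0 + 1) by ring. rewrite Rminus_diag_eq; [reflexivity|].
    apply sumd_ext. intros i Hi.
    rewrite (Hh i Hi), (periodic1_ds _ (periodic1_dt _ (Hh i Hi))), (periodic1_ds _ (Hh i Hi)),
      (periodic1_dt _ (Hh i Hi)). reflexivity.
  - intros s _. apply is_derive_sumd. intros i Hi. pose proof (flux_smooth i Hi).
    eapply is_derive_value.
    + apply is_derive_Rminus; apply is_derive_Rmult; apply (smooth_is_derive_s tstar);
        auto using smooth_ds, smooth_dt.
    + ring.
Qed.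

Let dissipation c t s := sigma t s * (4 * vnorm2 d (fun i => dt (ds (eta i)) t s) - c).

Lemma dissipation_smooth c : smooth tstar (dissipation c).
Proof.
  apply smooth_mult; [apply sigma_smooth|]. apply smooth_minus; [|apply smooth_const].
  apply smooth_mult; [apply smooth_const|].
  apply (smooth_sumd _ d (fun i t s => dt (ds (eta i)) t s ^ 2)). intros i Hi.
  apply (smooth_ext _ (fun t s => dt (ds (eta i)) t s * dt (ds (eta i)) t s)); [intros; ring|].
  apply smooth_mult; apply smooth_dt, smooth_ds, eta_smooth, Hi.
Qed.

Lemma dissipation_nonneg t s : in_time tstar t -> 0 <= s <= 1 ->
  0 <= dissipation ((2 * K t / L t ^ 2) ^ 2 / L t ^ 2) t s.
Proof.
  intros Ht Hs. pose proof (length_pos t Ht).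
  apply Rmult_le_pos; [apply sigma_nonneg; assumption|].
  pose proof (sumd_Cauchy_Schwarz d (fun i => ds (eta i) t s) (fun i => dt (ds (eta i)) t s)) as CS.
  cbv beta in CS. fold (vnorm2 d (fun i => ds (eta i) t s)) in CS.
  fold (vnorm2 d (fun i => dt (ds (eta i)) t s)) in CS.
  rewrite tangent_dot_tangent_dt, tangent_norm2 in CS by exact Ht.
  set (V := vnorm2 d (fun i => dt (ds (eta i)) t s)) in *.
  assert (HP : 0 < L t ^ 2) by (apply pow_lt; lra).
  replace ((2 * K t / L t ^ 2) ^ 2 / L t ^ 2) with (4 * ((- K t / L t ^ 2) ^ 2 / L t ^ 2))
    by (field; lra).
  enough ((- K t / L t ^ 2) ^ 2 / L t ^ 2 <= V) by lra.
  unfold Rdiv at 2. pose proof (Rinv_0_lt_compat _ HP). pose proof (Rinv_l (L t ^ 2)).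
  nra.
Qed.

Lemma length2_second_derivative_weighted t s : in_time tstar t ->
  sigma t s * (2 * sumd d (fun i =>
      dt (ds (eta i)) t s ^ 2 + ds (eta i) t s * dt (dt (ds (eta i))) t s))
  = dissipation ((2 * K t / L t ^ 2) ^ 2 / L t ^ 2) t s
    + (-2 * K t / L t ^ 2) * dt sigma t s + 2 / L t ^ 2 * flux_wronskian_ds t s.
Proof.
  intros Ht. pose proof (length_pos t Ht).
  set (v := fun i => dt (ds (eta i)) t s).
  set (S3 := sumd d (fun i => ds (eta i) t s * ds (ds (dt (flux i))) t s)).
  assert (HD : sumd d (fun i => dt (ds (eta i)) t s ^ 2 + ds (eta i) t s * dt (dt (ds (eta i))) t s)
     = vnorm2 d v + 2 * K t / L t ^ 4 * sumd d (fun i => ds (eta i) t s * v i) + / L t ^ 2 * S3).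
  { unfold vnorm2, S3. rewrite <- !sumd_scal, <- !sumd_plus. apply sumd_ext. intros i Hi.
    rewrite tangent_dt_dt by auto. unfold v. ring. }
  assert (HW : flux_wronskian_ds t s = sigma t s * S3
     + (- L t ^ 2 * dt sigma t s) * sumd d (fun i => ds (eta i) t s * v i)
     + (- L t ^ 2 * sigma t s) * vnorm2 d v).
  { unfold flux_wronskian_ds, vnorm2, S3. rewrite <- !sumd_scal, <- !sumd_plus.
    apply sumd_ext. intros i Hi.
    rewrite flux_dt by auto. unfold v. rewrite (tangent_dt i t s) by auto. unfold flux. field. lra. }
  rewrite HD, HW. unfold v. rewrite tangent_dot_tangent_dt by exact Ht. unfold dissipation.
  field. lra.
Qed.

Lemma ex_derive_n_length2 t : in_time tstar t -> ex_derive_n (fun u => L u ^ 2) 2 t.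
Proof. intros Ht. eexists. apply (is_derive_Derive_length2 t 0 Ht). Qed.

Lemma length2_convex t : in_time tstar t -> 0 <= Derive_n (fun u => L u ^ 2) 2 t.
Proof.
  intros Ht. pose proof (length_pos t Ht).
  set (D := Derive_n (fun u => L u ^ 2) 2 t).
  set (c := (2 * K t / L t ^ 2) ^ 2 / L t ^ 2).
  assert (HD : forall s, D = 2 * sumd d (fun i =>
      dt (ds (eta i)) t s ^ 2 + ds (eta i) t s * dt (dt (ds (eta i))) t s))
    by (intros s; apply is_derive_unique, is_derive_Derive_length2, Ht).
  assert (E : D = RInt (fun s => dissipation c t s + (-2 * K t / L t ^ 2) * dt sigma t s
                                 + 2 / L t ^ 2 * flux_wronskian_ds t s) 0 1 :> R).
  { transitivity (RInt (fun s => D * sigma t s) 0 1).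
    - rewrite RInt_scal_R, sigma_mean by (exact Ht || exact (smooth_ex_RInt _ _ t sigma_smooth Ht)).
      ring.
    - apply RInt_ext_R. intros s _. rewrite Rmult_comm, (HD s).
      apply length2_second_derivative_weighted, Ht. }
  assert (I1 : ex_RInt (fun s => dissipation c t s) 0 1)
    by exact (smooth_ex_RInt _ _ t (dissipation_smooth c) Ht).
  assert (I2 : ex_RInt (fun s => dt sigma t s) 0 1)
    by exact (smooth_ex_RInt _ _ t (smooth_dt _ _ sigma_smooth) Ht).
  assert (I3 : ex_RInt (fun s => flux_wronskian_ds t s) 0 1)
    by exact (smooth_ex_RInt _ _ t flux_wronskian_ds_smooth Ht).
  set (k := -2 * K t / L t ^ 2) in E.
  assert (I2' : ex_RInt (fun s => k * dt sigma t s) 0 1) by exact (ex_RInt_scal _ 0 1 k I2).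
  assert (I3' : ex_RInt (fun s => 2 / L t ^ 2 * flux_wronskian_ds t s) 0 1)
    by exact (ex_RInt_scal _ 0 1 _ I3).
  rewrite (RInt_plus_R (fun s => dissipation c t s + k * dt sigma t s)), RInt_plus_R,
    !RInt_scal_R, RInt_dt_sigma, RInt_flux_wronskian_ds in E by
    (exact Ht || assumption || exact (ex_RInt_plus _ _ 0 1 I1 I2')).
  rewrite E, !Rmult_0_r, !Rplus_0_r. apply RInt_ge_0; [lra | exact I1 |].
  intros s Hs. apply dissipation_nonneg; [exact Ht | lra].
Qed.

End UniformlyCompressingFlow.

Theorem proposition2p5 (d : nat) (tstar : Rbar) (eta : nat -> R -> R -> R)
    (sigma : R -> R -> R) :
  (2 <= d)%nat ->
  UCCSF d tstar eta sigma ->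
  forall t, in_time tstar t ->
    is_derive (curve_length d eta) t
      (- / (curve_length d eta t ^ 3) *
         RInt (fun s => sigma t s * curv2 d eta t s) 0 1) /\
    ex_derive_n (fun u => curve_length d eta u ^ 2) 2 t /\
    0 <= Derive_n (fun u => curve_length d eta u ^ 2) 2 t.
Proof.
  intros _ flow t Ht.
  split; [|split].
  - exact (is_derive_length d tstar eta sigma flow t Ht).
  - exact (ex_derive_n_length2 d tstar eta sigma flow t Ht).
  - exact (length2_convex d tstar eta sigma flow t Ht).
Qed.
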